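(* Let $n$ be a positive integer. Then: (1) For any symmetric bilinear form $S\in \mathcal{S}_n(k)$ there exist units $u_1, \dots, u_n \in k^\times$ such that $S$ is naively homotopic to the diagonal form $\langle u_1,\dots,u_n \rangle$. (2) For any pointed rational function $f\in \mathcal{F}_n(k)$ there exist units $u_1, \dots, u_n \in k^\times$ such that $f$ and $[u_1,\dots,u_n]$ are in the same pointed naive homotopy class.
   Context: Let $k$ be a field. $\mathcal{S}_n$ is the scheme of non-degenerate $n\times n$ symmetric matrices; two elements of $\mathcal{S}_n(k)$ are naively homotopic if they are linked by a finite chain of elements of $\mathcal{S}_n(k[T])$ evaluated at $T=0$ and $T=1$. $\mathcal{F}_n(k)$ is the set of pointed degree $n$ rational functions $\frac AB$ ($A\in k[X]$ monic of degree $n$, $\deg B<n$, $\mathrm{res}_{n,n}(A,B)\neq0$); pointed naive homotopy is the equivalence relation generated by elements of $\mathcal{F}_n(k[T])$ evaluated at $T=0,1$. $\langle u_1,\dots,u_n\rangle$ denotes the diagonal form $\langle u_1\rangle\oplus\dots\oplus\langle u_n\rangle\in\mathcal{S}_n(k)$, and $[u_1,\dots,u_n]$ denotes the rational function $\frac{X}{u_1}\oplus^{\mathrm{N}}\dots\oplus^{\mathrm{N}}\frac{X}{u_n}\in\mathcal{F}_n(k)$, where $\oplus^{\mathrm{N}}$ is defined by: if $A_iU_i+B_iV_i=1$ are Bézout relations ($\deg U_i\leq n_i-2$, $\deg V_i\leq n_i-1$), then $\frac{A_1}{B_1}\oplus^{\mathrm{N}}\frac{A_2}{B_2}=\frac{A_3}{B_3}$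 with $\begin{bmatrix}A_3 & -V_3\\ B_3 & U_3\end{bmatrix} = \begin{bmatrix}A_1 & -V_1\\ B_1 & U_1\end{bmatrix}\begin{bmatrix}A_2 & -V_2\\ B_2 & U_2\end{bmatrix}$. *)

From HB Require Import structures.
From mathcomp Require Import all_boot all_order all_algebra.
From Stdlib Require Import Relation_Operators.
Set Implicit Arguments. Unset Strict Implicit. Unset Printing Implicit Defensive.
Import GRing.Theory.
Local Open Scope ring_scope.

(* S_n(R) for a commutative ring R: symmetric n x n matrices whose determinant
   is a unit of R.  For R = k a field this is "det <> 0"; for R = k[T] it is
   "det is a nonzero constant". *)
Definition sym_nd (R : comUnitRingType) (n : nat) : pred 'M[R]_n :=
  [pred S | (S^T == S) && (\det S \is a GRing.unit)].
Arguments sym_nd {R} n.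

Definition ev_mx (k : fieldType) (n : nat) (t : k) (H : 'M[{poly k}]_n) : 'M[k]_n :=
  map_mx (fun p : {poly k} => p.[t]) H.

Definition sym_step (k : fieldType) (n : nat) (S1 S2 : 'M[k]_n) : Prop :=
  exists H : 'M[{poly k}]_n, H \in sym_nd n /\ ev_mx 0 H = S1 /\ ev_mx 1 H = S2.

Definition sym_naive_homotopic (k : fieldType) (n : nat) (S1 S2 : 'M[k]_n) : Prop :=
  clos_refl_sym_trans _ (@sym_step k n) S1 S2.

Definition diag_form (k : fieldType) (n : nat) (u : 'I_n -> k) : 'M[k]_n :=
  diag_mx (\row_i u i).

Definition sylvester_nn (R : comUnitRingType) (n : nat) (A B : {poly R}) : 'M[R]_(n + n) :=
  \matrix_(i < n + n, j < n + n)
     match split i with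
     | inl i' => (A * 'X^i')`_j
     | inr i' => (B * 'X^i')`_j
     end.

(* res_{n,n}(A, B) (up to a sign, irrelevant for being a unit) *)
Definition res_nn (R : comUnitRingType) (n : nat) (A B : {poly R}) : R :=
  \det (sylvester_nn n A B).

(* F_n(R): A monic of degree n, deg B < n, res_{n,n}(A,B) a unit.
   A rational function A/B is represented by its pair (A, B). *)
Definition in_Fn (R : comUnitRingType) (n : nat) (f : {poly R} * {poly R}) : Prop :=
  [/\ f.1 \is monic, size f.1 = n.+1, (size f.2 <= n)%N
    & res_nn n f.1 f.2 \is a GRing.unit].
Arguments in_Fn {R} n f.

Definition ev_pair (k : fieldType) (t : k) (f : {poly {poly k}} * {poly {poly k}})
  : {poly k} * {poly k} :=
  (map_poly (fun p : {poly k} => p.[t]) f.1, map_poly (fun p : {poly k} => p.[t]) f.2).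

Definition rf_step (k : fieldType) (n : nat) (f g : {poly k} * {poly k}) : Prop :=
  exists h : {poly {poly k}} * {poly {poly k}}, in_Fn n h /\ ev_pair 0 h = f /\ ev_pair 1 h = g.

Definition rf_naive_homotopic (k : fieldType) (n : nat) (f g : {poly k} * {poly k}) : Prop :=
  clos_refl_sym_trans _ (@rf_step k n) f g.

(* Matrix [A -V; B U] attached to X/u (degree 1): the Bezout relation
   X*U + u*V = 1 with deg U <= -1, deg V <= 0 forces U = 0, V = u^-1. *)
Definition bez_mx_X_over (k : fieldType) (u : k) : 'M[{poly k}]_2 :=
  \matrix_(i < 2, j < 2)
    if (i == 0 :> nat) && (j == 0 :> nat) then 'X
    else if (i == 0 :> nat) then - (u^-1)%:P
    else if (j == 0 :> nat) then u%:P
    else 0.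

(* [u_1,...,u_n] = X/u_1 (+)^N ... (+)^N X/u_n : the first column of the
   product of the Bezout matrices (definition of (+)^N). *)
Definition diag_rf (k : fieldType) (n : nat) (u : 'I_n -> k) : {poly k} * {poly k} :=
  let P := \prod_(i < n) bez_mx_X_over (u i) in
  (P 0 0, P 1 0).

From HB Require Import structures.
From mathcomp Require Import all_boot all_order all_algebra.
From Stdlib Require Import Relation_Operators.
From mathcomp Require Import ring zify.
Set Implicit Arguments. Unset Strict Implicit. Unset Printing Implicit Defensive.
Import GRing.Theory.
Local Open Scope ring_scope.

(* Both parts go by induction on n, splitting off one unit at a time.

   (1) Congruence by a unipotent block-triangular matrix P is a naive homotopy,
   through P(T) = 1 + T N.  Pivoting on the corner entry or on the complementary
   block turns S into a block-diagonal <s> (+) M.  If that block is singular,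
   adding T c E_00 does not change the determinant, and this first makes the
   corner entry 1.

   (2) A pair (A, B) lies in F_n iff u A + v B = 1 for some u, v, since the
   Sylvester matrix represents (u, v) |-> u A + v B in degrees < 2n.  The moves
   A |-> A + T P B and (A, B) |-> K(T) (A, B) with det K a nonzero constant keep
   such a relation, so they are homotopies.  With them the denominator is
   brought to degree exactly n - 1, with leading coefficient u say; then
   (A, B) = X/u (+)^N (E, F) with (E, F) in F_(n-1), and X/u (+)^N _ maps
   homotopies to homotopies. *)

Lemma clos_rst_map (T U : Type) (r : T -> T -> Prop) (r' : U -> U -> Prop) (f : T -> U) :
  (forall x y, r x y -> r' (f x) (f y)) ->
  forall x y, clos_refl_sym_trans _ r x y -> clos_refl_sym_trans _ r' (f x) (f y).
Proof.
move=> fr x y; elim=> [{}x {}y /fr|{}x|{}x {}y _|{}x {}y z _ IHxy _ IHyz].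
- exact: rst_step.
- exact: rst_refl.
- exact: rst_sym.
- exact: rst_trans IHxy IHyz.
Qed.

Lemma det_add_delta00 (R : comNzRingType) n (A : 'M[R]_(1 + n)) a :
  \det (A + a *: delta_mx 0 0) = \det A + a * \det (drsubmx A).
Proof.
have cofE j : cofactor (A + a *: delta_mx 0 0) 0 j = cofactor A 0 j.
  rewrite /cofactor; congr (_ * \det _); apply/matrixP => i j'.
  by rewrite !mxE eq_sym (negbTE (neq_lift _ _)) mulr0 addr0.
have drE : drsubmx A = row' 0 (col' 0 A).
  by apply/matrixP => i j; rewrite !mxE; congr (A _ _); apply/val_inj.
rewrite !(expand_det_row _ 0) (bigD1 0) //= [X in _ = X + _](bigD1 0) //= cofE.
rewrite !mxE !eqxx mulr1 mulrDl -!addrA; congr (_ + _).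
rewrite addrC; congr (_ + _); last by rewrite /cofactor drE addn0 expr0 mul1r.
by apply: eq_bigr => j /negbTE j0; rewrite cofE !mxE j0 andbF mulr0 addr0.
Qed.

Lemma sym_ndP (R : comUnitRingType) n (S : 'M[R]_n) :
  S \in sym_nd n <-> S^T = S /\ \det S \is a GRing.unit.
Proof. by rewrite inE; split=> [/andP[/eqP]|[-> ->]]; rewrite ?eqxx. Qed.

Section SymmetricNondegenerate.
Variable R : comUnitRingType.

Lemma sym_nd_map (R' : comUnitRingType) (f : {rmorphism R -> R'}) n (S : 'M[R]_n) :
  S \in sym_nd n -> map_mx f S \in sym_nd n.
Proof.
by move=> /sym_ndP[sS uS]; apply/sym_ndP; rewrite map_trmx sS det_map_mx rmorph_unit.
Qed.

Lemma sym_nd_congr n (S Q : 'M[R]_n) : S \in sym_nd n -> \det Q \is a GRing.unit ->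
  Q^T *m S *m Q \in sym_nd n.
Proof.
move=> /sym_ndP[sS uS] uQ; apply/sym_ndP; split.
  by rewrite !trmx_mul trmxK sS mulmxA.
by rewrite !det_mulmx det_tr !unitrM uQ uS.
Qed.

Lemma sym_nd_block_diag n (s : R) (M : 'M[R]_n) :
  block_mx s%:M 0 0 M \in sym_nd (1 + n) <-> s \is a GRing.unit /\ M \in sym_nd n.
Proof.
split=> [/sym_ndP[]|[us /sym_ndP[sM uM]]]; last first.
  by apply/sym_ndP; rewrite tr_block_mx !trmx0 tr_scalar_mx sM det_ublock det_scalar1 unitrM us.
rewrite tr_block_mx !trmx0 tr_scalar_mx det_ublock det_scalar1 unitrM.
by move=> /eq_block_mx[_ _ _ sM] /andP[-> uM]; split=> //; apply/sym_ndP.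
Qed.

Lemma sym_submx n (S : 'M[R]_(1 + n)) : S^T = S ->
  [/\ (ursubmx S)^T = dlsubmx S, (dlsubmx S)^T = ursubmx S,
      (ulsubmx S)^T = ulsubmx S & (drsubmx S)^T = drsubmx S].
Proof. by rewrite -{1 2}[S]submxK tr_block_mx => /eq_block_mx[-> -> -> ->]. Qed.

End SymmetricNondegenerate.

Section SymmetricHomotopies.
Variable k : fieldType.

Lemma ev_mxE n t (H : 'M[{poly k}]_n) : ev_mx t H = map_mx (horner_eval t) H.
Proof. by []. Qed.

Lemma ev_mx_polyC m n t (S : 'M[k]_(m, n)) : map_mx (horner_eval t) (map_mx polyC S) = S.
Proof. by apply/matrixP => i j; rewrite !mxE /= horner_evalE hornerC. Qed.

Lemma ev_mx_Xscale m n t (S : 'M[k]_(m, n)) :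
  map_mx (horner_eval t) ('X *: map_mx polyC S) = t *: S.
Proof. by rewrite map_mxZ ev_mx_polyC /= horner_evalE hornerX. Qed.

Lemma polyC_unit (c : k) : c != 0 -> c%:P \is a GRing.unit.
Proof. by move=> c_neq0; rewrite poly_unitE size_polyC c_neq0 coefC unitfE. Qed.

Lemma sym_step_sym_nd n (S1 S2 : 'M[k]_n) :
  sym_step S1 S2 -> S1 \in sym_nd n /\ S2 \in sym_nd n.
Proof. by case=> H [hH [<- <-]]; rewrite !ev_mxE; split; apply: sym_nd_map. Qed.

Lemma sym_step_congr n (S : 'M[k]_n) (P : 'M[{poly k}]_n) : S \in sym_nd n ->
  \det P = 1 -> ev_mx 0 P = 1%:M ->
  sym_step S ((ev_mx 1 P)^T *m S *m ev_mx 1 P).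
Proof.
move=> hS detP P0; exists (P^T *m map_mx polyC S *m P); split.
  by apply: sym_nd_congr; rewrite ?detP ?unitr1 ?(sym_nd_map polyC).
by rewrite !ev_mxE !map_mxM -!map_trmx -!ev_mxE P0 trmx1 mul1mx mulmx1 !ev_mxE !ev_mx_polyC.
Qed.

Lemma sym_step_lower n (S : 'M[k]_(1 + n)) (q : 'M[k]_(n, 1)) : S \in sym_nd (1 + n) ->
  sym_step S ((block_mx 1%:M 0 q 1%:M)^T *m S *m block_mx 1%:M 0 q 1%:M).
Proof.
move=> hS; pose P : 'M_(1 + n) := block_mx 1%:M 0 ('X *: map_mx polyC q) 1%:M.
have evP t : ev_mx t P = block_mx 1%:M 0 (t *: q) 1%:M.
  by rewrite ev_mxE map_block_mx ev_mx_Xscale map_mx0 !map_mx1.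
rewrite -[q]scale1r -evP; apply: sym_step_congr => //.
  by rewrite det_lblock !det1 mulr1.
by rewrite evP scale0r -scalar_mx_block.
Qed.

Lemma sym_step_upper n (S : 'M[k]_(1 + n)) (r : 'M[k]_(1, n)) : S \in sym_nd (1 + n) ->
  sym_step S ((block_mx 1%:M r 0 1%:M)^T *m S *m block_mx 1%:M r 0 1%:M).
Proof.
move=> hS; pose P : 'M_(1 + n) := block_mx 1%:M ('X *: map_mx polyC r) 0 1%:M.
have evP t : ev_mx t P = block_mx 1%:M (t *: r) 0 1%:M.
  by rewrite ev_mxE map_block_mx ev_mx_Xscale map_mx0 !map_mx1.
rewrite -[r]scale1r -evP; apply: sym_step_congr => //.
  by rewrite det_ublock !det1 mulr1.
by rewrite evP scale0r -scalar_mx_block.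
Qed.

Definition splits_off n (S : 'M[k]_(1 + n)) := exists s (M : 'M[k]_n),
  [/\ s != 0, M \in sym_nd n & sym_naive_homotopic S (block_mx s%:M 0 0 M)].

Lemma splits_off_block_diag n (S : 'M[k]_(1 + n)) (a : 'M[k]_1) M :
  block_mx a 0 0 M \in sym_nd (1 + n) -> sym_step S (block_mx a 0 0 M) -> splits_off S.
Proof.
rewrite [a]mx11_scalar => /sym_nd_block_diag[ua hM] st.
by exists (a 0 0), M; split; rewrite -?unitfE //; apply: rst_step.
Qed.

Lemma splits_off_pivot_dr n (S : 'M[k]_(1 + n)) : S \in sym_nd (1 + n) ->
  drsubmx S \in unitmx -> splits_off S.
Proof.
move=> hS uM; have /sym_ndP[/sym_submx[sr sl _ sM] _] := hS.
set a := ulsubmx S; set r := ursubmx S in sr sl *;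
set l := dlsubmx S in sr sl *; set M := drsubmx S in sM uM *.
pose q := - (invmx M *m l).
have := sym_step_lower q hS.
have -> : (block_mx 1%:M 0 q 1%:M)^T *m S *m block_mx 1%:M 0 q 1%:M =
          block_mx (a + q^T *m l) 0 0 M.
  rewrite -[S]submxK -/a -/r -/l -/M tr_block_mx !trmx1 !trmx0 !mulmx_block.
  rewrite !mul1mx !mul0mx !mulmx0 !mulmx1 ?addr0 ?add0r.
  have -> : r + q^T *m M = 0.
    by rewrite /q linearN /= trmx_mul trmx_inv sM sl mulNmx -mulmxA mulVmx // mulmx1 addrN.
  have -> : l + M *m q = 0 by rewrite /q mulmxN mulmxA mulmxV // mul1mx subrr.
  by rewrite mul0mx addr0.
by move=> st; exact: splits_off_block_diag (proj2 (sym_step_sym_nd st)) st.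
Qed.

Lemma splits_off_pivot_ul n (S : 'M[k]_(1 + n)) : S \in sym_nd (1 + n) ->
  ulsubmx S \in unitmx -> splits_off S.
Proof.
move=> hS ua; have /sym_ndP[/sym_submx[sr sl sa _] _] := hS.
set a := ulsubmx S in sa ua *; set r := ursubmx S in sr sl *;
set l := dlsubmx S in sr sl *; set M := drsubmx S.
pose p := - (invmx a *m r).
have := sym_step_upper p hS.
have -> : (block_mx 1%:M p 0 1%:M)^T *m S *m block_mx 1%:M p 0 1%:M =
          block_mx a 0 0 (M + p^T *m r).
  rewrite -[S]submxK -/a -/r -/l -/M tr_block_mx !trmx1 !trmx0 !mulmx_block.
  rewrite !mul1mx !mul0mx !mulmx0 !mulmx1 ?addr0 ?add0r.
  have -> : a *m p + r = 0 by rewrite /p mulmxN mulmxA mulmxV // mul1mx addNr.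
  have -> : p^T *m a + l = 0.
    by rewrite /p linearN /= trmx_mul trmx_inv sa sr mulNmx -mulmxA mulVmx // mulmx1 addNr.
  by rewrite mul0mx add0r addrC.
by move=> st; exact: splits_off_block_diag (proj2 (sym_step_sym_nd st)) st.
Qed.

Lemma sym_step_add_delta00 n (S : 'M[k]_(1 + n)) c : S \in sym_nd (1 + n) ->
  \det (drsubmx S) = 0 -> sym_step S (S + c *: delta_mx 0 0).
Proof.
move=> /sym_ndP[sS uS] dM.
exists (map_mx polyC S + (c%:P * 'X) *: delta_mx 0 0); split; last first.
  have evE t : ev_mx t (map_mx polyC S + (c%:P * 'X) *: delta_mx 0 0) =
               S + (c * t) *: delta_mx 0 0.
    rewrite ev_mxE map_mxD ev_mx_polyC map_mxZ /= horner_evalE hornerCM hornerX.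
    by congr (_ + _ *: _); apply/matrixP => i j; rewrite !mxE rmorph_nat.
  by rewrite !evE mulr0 scale0r addr0 mulr1.
apply/sym_ndP; split.
  by rewrite linearD linearZ /= map_trmx sS trmx_delta.
rewrite det_add_delta00 -map_drsubmx !det_map_mx dM rmorph0 mulr0 addr0.
by rewrite polyC_unit -?unitfE.
Qed.

Lemma splits_off_sym_nd n (S : 'M[k]_(1 + n)) : S \in sym_nd (1 + n) -> splits_off S.
Proof.
move=> hS; have [dM|dM] := eqVneq (\det (drsubmx S)) 0; last first.
  by apply: splits_off_pivot_dr; rewrite // unitmxE unitfE.
have st := sym_step_add_delta00 (1 - S 0 0) hS dM.
have [s [M [s_neq0 hM homS]]] : splits_off (S + (1 - S 0 0) *: delta_mx 0 0).
  apply: splits_off_pivot_ul; first exact: (sym_step_sym_nd st).2.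
  rewrite unitmxE unitfE det_mx11 !mxE.
  have -> : lshift n (0 : 'I_1) = 0 by apply/val_inj.
  by rewrite !eqxx mulr1 addrC subrK oner_eq0.
by exists s, M; split=> //; apply: rst_trans (rst_step _ _ _ _ st) homS.
Qed.

Lemma sym_step_block n (s : k) (M1 M2 : 'M[k]_n) : s != 0 -> sym_step M1 M2 ->
  sym_step (block_mx s%:M 0 0 M1 : 'M_(1 + n)) (block_mx s%:M 0 0 M2).
Proof.
move=> s_neq0 [H [hH [<- <-]]]; exists (block_mx (s%:P)%:M 0 0 H); split.
  by apply/sym_nd_block_diag; rewrite polyC_unit.
by rewrite !ev_mxE !map_block_mx !map_scalar_mx !map_mx0 /= !horner_evalE !hornerC.
Qed.

Lemma diag_formS n (u : 'I_n -> k) (s : k) :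
  diag_form (fun i : 'I_(1 + n) => if unlift ord0 i is Some j then u j else s) =
  block_mx s%:M 0 0 (diag_form u).
Proof.
rewrite /diag_form.
have -> : \row_(i < 1 + n) (if unlift ord0 i is Some j then u j else s) =
          row_mx (\row_(j < 1) s) (\row_j u j).
  apply/rowP => i; rewrite mxE -[i]splitK; case: (split i) => j.
    rewrite row_mxEl mxE (ord1 j) (_ : unsplit (inl 0) = ord0 :> 'I_(1 + n)) ?unlift_none //.
    exact: val_inj.
  rewrite row_mxEr mxE (_ : unsplit (inr j) = lift ord0 j :> 'I_(1 + n)) ?liftK //.
  exact: val_inj.
rewrite diag_mx_row; congr block_mx.
by apply/matrixP => i j; rewrite !mxE (ord1 i) (ord1 j).
Qed.

End SymmetricHomotopies.

Theorem sym_homotopic_diag_form (k : fieldType) n (S : 'M[k]_n) : S \in sym_nd n ->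
  exists u : 'I_n -> k, (forall i, u i != 0) /\ sym_naive_homotopic S (diag_form u).
Proof.
elim: n S => [|n IHn] S hS.
  exists (fun=> 1); split=> [i|]; first exact: oner_neq0.
  by rewrite (flatmx0 S) (flatmx0 (diag_form _)); apply: rst_refl.
have [s [M [s_neq0 hM homS]]] := splits_off_sym_nd (hS : S \in sym_nd (1 + n)).
have [v [v_neq0 homM]] := IHn M hM.
exists (fun i : 'I_(1 + n) => if unlift ord0 i is Some j then v j else s); split.
  by move=> i; case: unlift.
rewrite diag_formS; apply: rst_trans homS _.
exact: clos_rst_map (fun M1 M2 => sym_step_block (M2 := M2) s_neq0) _ _ homM.
Qed.

Section SylvesterResultant.
Variable R : comUnitRingType.
Implicit Types A B : {poly R}.

Definition bezout A B := exists u v, u * A + v * B = 1.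

Lemma rVpolyE d (v : 'rV[R]_d) : rVpoly v = \sum_(i < d) v 0 i *: 'X^i.
Proof.
rewrite {1}(row_sum_delta v) linear_sum.
by apply: eq_bigr => i _; rewrite linearZ /=; congr (_ *: _); apply: rVpoly_delta.
Qed.

Lemma sylvester_nn_mulmx n A B (r : 'rV[R]_(n + n)) j :
  (r *m sylvester_nn n A B) 0 j =
  (rVpoly (lsubmx r) * A + rVpoly (rsubmx r) * B)`_j.
Proof.
rewrite mxE big_split_ord coefD !rVpolyE !mulr_suml !coef_sum.
congr (_ + _); apply: eq_bigr => i _; rewrite !mxE (unsplitK (inl _ _), unsplitK (inr _ _)).
all: by rewrite -scalerAl coefZ (mulrC 'X^_).
Qed.

Lemma bezout_Xn_bounded n A B j : A \is monic -> size A = n.+1 ->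
  (size B <= n)%N -> bezout A B -> (j < n + n)%N ->
  exists x y : {poly R}, [/\ (size x <= n)%N, (size y <= n)%N & x * A + y * B = 'X^j].
Proof.
move=> mA sA sB [x0 [y0 Bez]] ltj.
pose q := Pdiv.Ring.rdivp ('X^j * y0) A; pose y := Pdiv.Ring.rmodp ('X^j * y0) A.
pose x := 'X^j * x0 + q * B.
have Bezj : x * A + y * B = 'X^j.
  have E : 'X^j * y0 = q * A + y := Pdiv.RingMonic.rdivp_eq mA _.
  have -> : y = 'X^j * y0 - q * A by rewrite E; ring.
  by rewrite /x -[RHS]mulr1 -Bez; ring.
have sy : (size y <= n)%N by rewrite -ltnS -sA Pdiv.Ring.ltn_rmodp -size_poly_gt0 sA.
exists x, y; split=> //.
have [->|x_neq0] := eqVneq x 0; first by rewrite size_poly0.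
have : (size (x * A)%R <= n + n)%N.
  rewrite (_ : x * A = 'X^j - y * B); last by rewrite -Bezj; ring.
  apply: leq_trans (size_polyD _ _) _; rewrite geq_max size_polyXn ltj size_polyN.
  apply: leq_trans (size_polyMleq _ _) _.
  by apply: leq_trans (leq_pred _) _; apply: leq_add.
by rewrite size_Mmonic // sA addnS leq_add2r.
Qed.

Lemma res_nn_unit n A B : A \is monic -> size A = n.+1 ->
  (size B <= n)%N -> bezout A B -> res_nn n A B \is a GRing.unit.
Proof.
move=> mA sA sB Bez.
have /fin_all_exists [x /fin_all_exists [y Exy]] := fun j : 'I_(n + n) =>
  bezout_Xn_bounded mA sA sB Bez (ltn_ord j).
pose M : 'M[R]_(n + n) := \matrix_j row_mx (poly_rV (x j)) (poly_rV (y j)).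
have : M *m sylvester_nn n A B = 1%:M.
  apply/matrixP => j i.
  have -> : (M *m sylvester_nn n A B) j i = (row j M *m sylvester_nn n A B) 0 i.
    by rewrite -row_mul [RHS]mxE.
  have [sx sy Exyj] := Exy j.
  rewrite sylvester_nn_mulmx rowK row_mxKl row_mxKr !poly_rV_K // Exyj.
  by rewrite coefXn mxE eq_sym.
move/(congr1 determinant); rewrite det_mulmx det1 => detM.
by apply/unitrPr; exists (\det M); rewrite /res_nn mulrC.
Qed.

Lemma res_nn_bezout n A B : A \is monic -> size A = n.+1 ->
  (size B <= n)%N -> res_nn n A B \is a GRing.unit -> bezout A B.
Proof.
move=> mA sA sB res_unit.
case: n sA sB res_unit => [|n] sA sB res_unit.
  exists 1, 0; rewrite mul0r addr0 mul1r [A]size1_polyC ?sA //.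
  by move: mA; rewrite monicE lead_coefE sA => /eqP ->.
have S_unit : sylvester_nn n.+1 A B \in unitmx by rewrite unitmxE.
pose r : 'rV[R]_(n.+1 + n.+1) :=
  delta_mx 0 (Ordinal (ltn0Sn (n + n.+1))) *m invmx (sylvester_nn n.+1 A B).
exists (rVpoly (lsubmx r)), (rVpoly (rsubmx r)); apply/polyP => j.
have [ltj|] := ltnP j (n.+1 + n.+1).
  by rewrite -(sylvester_nn_mulmx A B r (Ordinal ltj)) mulmxKV // mxE coef1.
rewrite coef1; case: j => [//|j] lej /=.
apply: (leq_sizeP _ (n.+1 + n.+1)) => //.
apply: leq_trans (size_polyD _ _) _; rewrite geq_max.
apply/andP; split; apply: leq_trans (size_polyMleq _ _) _.
  by rewrite sA addnS leq_add2r size_poly.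
by apply: leq_trans (leq_pred _) (leq_add (size_poly _ _) sB).
Qed.

End SylvesterResultant.

Section PolySize.
Variable R : nzRingType.
Implicit Types p q : {poly R}.

Lemma leq_size_mul p q a b :
  (size p <= a)%N -> (size q <= b)%N -> (size (p * q)%R <= (a + b).-1)%N.
Proof.
by move=> sp sq; apply: leq_trans (size_polyMleq p q) _; rewrite -!subn1 leq_sub2r ?leq_add.
Qed.

Lemma leq_size_add p q n :
  (size p <= n)%N -> (size q <= n)%N -> (size (p + q)%R <= n)%N.
Proof. by move=> sp sq; apply: leq_trans (size_polyD _ _) _; rewrite geq_max sp sq. Qed.

Lemma leq_size_sub p q n :
  (size p <= n)%N -> (size q <= n)%N -> (size (p - q)%R <= n)%N.
Proof. by move=> sp sq; apply: leq_size_add; rewrite ?size_polyN. Qed.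

Lemma monicDl p q : p \is monic -> (size q < size p)%N -> p + q \is monic.
Proof. by move=> mp sq; rewrite monicE lead_coefDl // (monicP mp). Qed.

Lemma size_sub_monic p q n : p \is monic -> q \is monic ->
  size p = n.+1 -> size q = n.+1 -> (size (p - q)%R <= n)%N.
Proof.
move=> mp mq sp sq; apply/leq_sizeP => j; rewrite leq_eqVlt => /orP[/eqP <-|ltnj].
  by move: (monicP mp) (monicP mq); rewrite !lead_coefE sp sq coefB => -> ->; rewrite subrr.
by rewrite coefB !nth_default ?subr0 ?sp ?sq.
Qed.

Lemma size_XnM j p : p \is monic -> size ('X^j * p) = (j + size p)%N.
Proof. by move=> mp; rewrite -commr_polyXn size_mulXn ?monic_neq0. Qed.

Lemma size_XnMD j p q : p \is monic -> (size q < j + size p)%N ->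
  size ('X^j * p + q) = (j + size p)%N.
Proof. by move=> mp sq; rewrite size_polyDl size_XnM. Qed.

Lemma monic_XnMD j p q : p \is monic -> (size q < j + size p)%N ->
  'X^j * p + q \is monic.
Proof. by move=> mp sq; apply: monicDl; rewrite ?monicMl ?monicXn ?size_XnM. Qed.

End PolySize.

Section PointedRationalFunctions.
Variable R : comUnitRingType.

Definition bezout_Fn n (f : {poly R} * {poly R}) :=
  [/\ f.1 \is monic, size f.1 = n.+1, (size f.2 <= n)%N & bezout f.1 f.2].

Lemma in_FnP n f : in_Fn n f <-> bezout_Fn n f.
Proof.
split=> [[mA sA sB res_unit] | [mA sA sB Bez]]; split=> //.
  exact: res_nn_bezout res_unit.
exact: res_nn_unit.
Qed.

Lemma bezout_map (S : comUnitRingType) (f : {rmorphism R -> S}) (A B : {poly R}) :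
  bezout A B -> bezout (map_poly f A) (map_poly f B).
Proof.
case=> [u [v Bez]]; exists (map_poly f u), (map_poly f v).
by rewrite -!rmorphM -rmorphD Bez rmorph1.
Qed.

Lemma bezout_transform (A B K11 K12 K21 K22 c : {poly R}) :
  c * (K11 * K22 - K12 * K21) = 1 -> bezout A B ->
  bezout (K11 * A + K12 * B) (K21 * A + K22 * B).
Proof.
move=> c_inv [u [v Bez]].
exists (c * (u * K22 - v * K21)), (c * (v * K11 - u * K12)).
by rewrite -[RHS]mulr1 -{1}c_inv -Bez; ring.
Qed.

(* [oplusX c d f] is [X/d (+)^N f] when [c = d^-1]: the first column of
   [[X, -c], [d, 0]] times the Bezout matrix of [f]. *)
Definition oplusX (c d : R) (f : {poly R} * {poly R}) :=
  ('X * f.1 - c%:P * f.2, d%:P * f.1).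

Lemma bezout_Fn_oplusX n c d f :
  c * d = 1 -> bezout_Fn n f -> bezout_Fn n.+1 (oplusX c d f).
Proof.
case: f => E F cd [/= mE sE sF [x [y Bez]]].
have sF' : (size (- (c%:P * F))%R < 1 + size E)%N.
  by rewrite size_polyN sE; apply: leq_ltn_trans (leq_size_mul (size_polyC_leq1 c) sF) _.
split=> /=.
- by rewrite -[X in X * E]expr1; apply: monic_XnMD.
- by rewrite -[X in X * E]expr1 size_XnMD // sE.
- exact: leq_size_mul (size_polyC_leq1 d) (eq_leq sE).
exists (- y * d%:P), (x * c%:P + y * 'X).
transitivity ((c * d)%:P * (x * E + y * F)); first by rewrite polyCM /=; ring.
by rewrite cd Bez mulr1.
Qed.

End PointedRationalFunctions.

Section Homotopies.
Variable k : fieldType.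
Local Notation PP := {poly {poly k}}.

Definition liftp (p : {poly k}) : PP := map_poly polyC p.
Local Notation T := (('X : {poly k})%:P : PP).
Local Notation evp t := (map_poly (horner_eval t) : PP -> {poly k}).

Lemma ev_pairE t h : ev_pair t h = (evp t h.1, evp t h.2).
Proof. by []. Qed.

Lemma liftpK t p : evp t (liftp p) = p.
Proof.
rewrite /liftp -map_poly_comp map_poly_id // => x _.
by rewrite /= horner_evalE hornerC.
Qed.

Lemma evpT t : evp t T = t%:P.
Proof. by rewrite map_polyC /= horner_evalE hornerX. Qed.

Lemma bezout_Fn_evp n t (h : PP * PP) : bezout_Fn n h -> bezout_Fn n (ev_pair t h).
Proof.
case: h => A B [/= mA sA sB Bez]; rewrite ev_pairE.
have lead1 : horner_eval t (lead_coef A) = 1 by rewrite (monicP mA) horner_evalE hornerC.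
have ev0 : horner_eval t 0 = 0 by rewrite horner_evalE horner0.
split=> /=.
- by rewrite monicE (lead_coef_map_id0 ev0) ?lead1 ?oner_eq0.
- by rewrite size_map_poly_id0 ?lead1 ?oner_eq0.
- exact: leq_trans (size_poly _ _) sB.
- exact: bezout_map.
Qed.

Lemma rf_step_evp n (h : PP * PP) :
  bezout_Fn n h -> rf_step n (ev_pair 0 h) (ev_pair 1 h).
Proof. by move=> hF; exists h; split=> //; apply/in_FnP. Qed.

Lemma rf_step_in_Fn n (f g : {poly k} * {poly k}) :
  rf_step n f g -> in_Fn n f /\ in_Fn n g.
Proof.
by case=> h [/in_FnP hF [<- <-]]; split; apply/in_FnP/bezout_Fn_evp.
Qed.

Lemma rf_homotopic_in_Fn n (f g : {poly k} * {poly k}) :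
  rf_naive_homotopic n f g -> in_Fn n f <-> in_Fn n g.
Proof. by elim=> [{}f {}g /rf_step_in_Fn|||]; tauto. Qed.

Lemma rf_step_num_add n (A B P : {poly k}) : bezout_Fn n (A, B) ->
  (size (P * B)%R <= n)%N -> rf_step n (A, B) (A + P * B, B).
Proof.
case=> /= mA sA sB [x [y Bez]] sPB.
pose h := (liftp A + T * liftp (P * B), liftp B).
have -> : (A, B) = ev_pair 0 h.
  by rewrite ev_pairE /= rmorphD rmorphM /= evpT !liftpK mul0r addr0.
have -> : (A + P * B, B) = ev_pair 1 h.
  by rewrite ev_pairE /= rmorphD rmorphM /= evpT !liftpK mul1r.
apply: rf_step_evp; split=> /=.
- apply: monicDl; first by rewrite map_monic.
  by rewrite size_Cmul ?polyX_eq0 // !size_map_polyC sA.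
- by rewrite size_polyDl size_map_polyC // size_Cmul ?polyX_eq0 // !size_map_polyC sA.
- by rewrite size_map_polyC.
exists (liftp x), (liftp y - liftp x * T * liftp P).
by rewrite -[RHS](rmorph1 (map_poly polyC)) -Bez /liftp !rmorphD !rmorphM; ring.
Qed.

Lemma bezout_Fn_den_neq0 n (A B : {poly k}) : bezout_Fn n.+1 (A, B) -> B != 0.
Proof.
case=> /= _ sA _ [x [y Bez]]; apply/eqP => B0.
have : A \is a GRing.unit by apply/unitrPr; exists x; rewrite mulrC -Bez B0 mulr0 addr0.
by rewrite poly_unitE sA.
Qed.

Lemma rf_step_num_normalize n e (A al : {poly k}) (b : k) :
  bezout_Fn n.+1 (A, b%:P * al) -> b != 0 -> al \is monic ->
  n = (e + size al)%N ->
  rf_step n.+1 (A, b%:P * al) ('X^(e.+2) * al + A %% al, b%:P * al).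
Proof.
move=> hF b_neq0 mal en; have [/= mA sA _ _] := hF.
have al_neq0 : al != 0 by rewrite monic_neq0.
have smod : (size (A %% al)%R < e.+2 + size al)%N.
  by apply: leq_trans (ltn_modpN0 _ al_neq0) _; rewrite leq_addl.
pose P := (b^-1)%:P * ('X^(e.+2) - A %/ al).
have PB : P * (b%:P * al) = 'X^(e.+2) * al + A %% al - A.
  rewrite {2}(divp_eq A al).
  transitivity (((b^-1)%:P * b%:P) * ('X^(e.+2) - A %/ al) * al); first by rewrite /P; ring.
  by rewrite -polyCM mulVf // mul1r; ring.
rewrite -[_ + A %% al](addrNK A) -PB addrC.
apply: rf_step_num_add => //; rewrite PB.
by apply: size_sub_monic; rewrite ?monic_XnMD ?size_XnMD // en.
Qed.

(* This is K(T) (al, be) for a matrix K(T) of constant determinant -b; at T = 1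
   its denominator has the monic leading term X^(e+1) al. *)
Definition den_raise_homotopy (e : nat) (b : k) (al be : {poly k}) : PP * PP :=
  let C := liftp (b^-1)%:P in
  ('X^(e.+2) * liftp al + (1 - T * C * 'X^(e.+1)) * liftp be,
   (liftp b%:P + T * 'X^(e.+1)) * liftp al - T * T * C * 'X^e * liftp be).

Lemma den_raise_homotopy0 e b al be :
  ev_pair 0 (den_raise_homotopy e b al be) = ('X^(e.+2) * al + be, b%:P * al).
Proof.
rewrite ev_pairE /= !(rmorphD, rmorphB, rmorphN, rmorphM, rmorphXn, rmorph1) /=.
by rewrite evpT map_polyX !liftpK !(mul0r, mulr0, subr0, addr0, mul1r) -exprS.
Qed.

Lemma den_raise_homotopy1 e b al be :
  (ev_pair 1 (den_raise_homotopy e b al be)).2 =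
  'X^(e.+1) * al + (b%:P * al - (b^-1)%:P * 'X^e * be).
Proof.
rewrite ev_pairE /= !(rmorphD, rmorphB, rmorphN, rmorphM, rmorphXn) /=.
by rewrite evpT map_polyX !liftpK !mul1r; ring.
Qed.

Lemma bezout_Fn_den_raise_homotopy n e b (al be : {poly k}) :
  b != 0 -> al \is monic -> (size be < size al)%N -> n = (e + size al)%N ->
  bezout al be -> bezout_Fn n.+1 (den_raise_homotopy e b al be).
Proof.
move=> b_neq0 mal sbe en bez; rewrite /den_raise_homotopy.
set C := liftp (b^-1)%:P; set Bc := liftp b%:P.
have sC : (size C <= 1)%N by rewrite size_map_polyC size_polyC_leq1.
have sBc : (size Bc <= 1)%N by rewrite size_map_polyC size_polyC_leq1.
have sT : (size T <= 1)%N := size_polyC_leq1 _.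
have sX j : (size ('X^j : PP) <= j.+1)%N by rewrite size_polyXn.
have sK12 : (size (1 - T * C * 'X^(e.+1))%R <= e.+2)%N.
  by apply: leq_size_sub; [rewrite size_poly1 | exact: leq_size_mul (leq_size_mul sT sC) (sX _)].
have sK21 : (size (Bc + T * 'X^(e.+1))%R <= e.+2)%N.
  by apply: leq_size_add; [exact: leq_trans sBc _ | exact: leq_size_mul sT (sX _)].
have sK22 : (size (T * T * C * 'X^e)%R <= e.+1)%N.
  exact: leq_size_mul (leq_size_mul (leq_size_mul sT sT) sC) (sX _).
have sal := size_map_polyC al; have sbe' := size_map_polyC be.
have s2 : (size ((1 - T * C * 'X^(e.+1)) * liftp be)%R < e.+2 + size (liftp al))%N.
  by apply: leq_ltn_trans (leq_size_mul sK12 (eq_leq sbe')) _; rewrite sal; lia.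
split=> /=.
- by apply: monic_XnMD; rewrite ?map_monic.
- by rewrite size_XnMD ?map_monic // sal en.
- apply: leq_size_sub.
    by apply: leq_trans (leq_size_mul sK21 (eq_leq sal)) _; rewrite en.
  by apply: leq_trans (leq_size_mul sK22 (eq_leq sbe')) _; rewrite en; lia.
rewrite -[in X in bezout _ X]mulNr.
apply: (@bezout_transform _ _ _ _ _ _ _ (- C)) (bezout_map _ bez).
have CBc : C * Bc = 1 by rewrite -rmorphM -polyCM mulVf ?rmorph1.
transitivity (C * Bc + T * C * 'X * 'X^e * (1 - C * Bc)); first by rewrite !exprS; ring.
by rewrite CBc subrr mulr0 addr0.
Qed.

Lemma rf_step_den_raise n e b (al be : {poly k}) :
  bezout_Fn n.+1 ('X^(e.+2) * al + be, b%:P * al) -> b != 0 -> al \is monic ->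
  (size be < size al)%N -> n = (e + size al)%N ->
  exists2 g : {poly k} * {poly k},
    size g.2 = n.+1 & rf_step n.+1 ('X^(e.+2) * al + be, b%:P * al) g.
Proof.
move=> [_ _ _ [x [y Bez]]] b_neq0 mal sbe en.
have bez : bezout al be by exists (x * 'X^(e.+2) + y * b%:P), x; rewrite -Bez /=; ring.
exists (ev_pair 1 (den_raise_homotopy e b al be)); last first.
  rewrite -den_raise_homotopy0; apply: rf_step_evp.
  exact: bezout_Fn_den_raise_homotopy.
have s2 : (size (b%:P * al - (b^-1)%:P * 'X^e * be)%R <= e + size al)%N.
  apply: leq_size_sub.
    by apply: leq_trans (leq_size_mul (size_polyC_leq1 b) (leqnn _)) _; rewrite leq_addl.
  have sXe : (size ((b^-1)%:P * 'X^e)%R <= e.+1)%N.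
    exact: leq_size_mul (size_polyC_leq1 b^-1) (eq_leq (size_polyXn _ e)).
  by apply: leq_trans (leq_size_mul sXe (leqnn _)) _; rewrite addSn leq_add2l ltnW.
by rewrite den_raise_homotopy1 size_XnMD // en.
Qed.

Lemma rf_homotopic_den_full n (A B : {poly k}) : bezout_Fn n.+1 (A, B) ->
  exists2 g : {poly k} * {poly k},
    size g.2 = n.+1 & rf_naive_homotopic n.+1 (A, B) g.
Proof.
move=> hF; have [_ _ sB _] := hF.
have [fullB|ltB] := eqVneq (size B) n.+1; first by exists (A, B) => //; apply: rst_refl.
have b_neq0 : lead_coef B != 0 by rewrite lead_coef_eq0 (bezout_Fn_den_neq0 hF).
set b := lead_coef B in b_neq0; pose al := b^-1 *: B.
have mal : al \is monic by rewrite monicE lead_coefZ mulVf.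
have [e en] : exists e, n = (e + size al)%N.
  exists (n - size al)%N; rewrite subnK // size_scale ?invr_eq0 //.
  by rewrite -ltnS ltn_neqAle ltB.
have Bal : B = b%:P * al by rewrite mul_polyC scalerA mulfV // scale1r.
have smod : (size (A %% al)%R < size al)%N by rewrite ltn_modpN0 ?monic_neq0.
rewrite Bal in hF *; have st1 := rf_step_num_normalize hF b_neq0 mal en.
have /in_FnP hF1 := proj2 (rf_step_in_Fn st1).
have [g sg st2] := rf_step_den_raise hF1 b_neq0 mal smod en.
by exists g => //; apply: rst_trans (rst_step _ _ _ _ st1) (rst_step _ _ _ _ st2).
Qed.

Lemma oplusX_decompose n u (A E : {poly k}) : u != 0 ->
  bezout_Fn n.+1 (A, u%:P * E) -> E \is monic -> size E = n.+1 ->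
  A`_n = ('X * E)`_n ->
  bezout_Fn n (E, u%:P * ('X * E - A)) /\
  (A, u%:P * E) = oplusX u^-1 u (E, u%:P * ('X * E - A)).
Proof.
move=> u_neq0 [/= mA sA _ [x [y Bez]]] mE sE An.
have uK : (u^-1)%:P * (u%:P * ('X * E - A)) = 'X * E - A.
  by rewrite mulrA -polyCM mulVf // mul1r.
split; last by rewrite /oplusX /= uK opprB addrC subrK.
have sXE : size ('X * E) = n.+2 by rewrite -[X in X * E]expr1 size_XnM // sE.
have sD : (size ('X * E - A)%R <= n.+1)%N.
  by apply: size_sub_monic; rewrite ?sXE // -[X in X * E]expr1 monicMl ?monicXn.
split=> //=.
  rewrite size_Cmul //; apply/leq_sizeP => j; rewrite leq_eqVlt => /orP[/eqP <-|ltnj].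
    by rewrite coefB An subrr.
  exact: (leq_sizeP _ _ sD).
exists (x * 'X + y * u%:P), (- x * (u^-1)%:P).
by rewrite -Bez -mulrA uK; ring.
Qed.

Lemma rf_step_oplusX_split n (A B : {poly k}) :
  bezout_Fn n.+1 (A, B) -> size B = n.+1 ->
  exists u E F,
    [/\ u != 0, bezout_Fn n (E, F) & rf_step n.+1 (A, B) (oplusX u^-1 u (E, F))].
Proof.
move=> hF sB; pose u := lead_coef B; pose E := u^-1 *: B.
have u_neq0 : u != 0 by rewrite lead_coef_eq0 -size_poly_gt0 sB.
have mE : E \is monic by rewrite monicE lead_coefZ mulVf.
have sE : size E = n.+1 by rewrite size_scale ?invr_eq0.
pose cc := (('X * E)`_n - A`_n) / u.
have st : rf_step n.+1 (A, B) (A + cc%:P * B, B).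
  by apply: rf_step_num_add; rewrite // mul_polyC (leq_trans (size_scale_leq _ _)) ?sB.
have /in_FnP hF3 := proj2 (rf_step_in_Fn st).
have Bu : B = u%:P * E by rewrite mul_polyC scalerA mulfV // scale1r.
have Bn : B`_n = u by rewrite /u lead_coefE sB.
have An : (A + cc%:P * B)`_n = ('X * E)`_n.
  by rewrite coefD coefCM Bn mulfVK // addrC subrK.
rewrite Bu in st hF3 An *.
have [hEF eq] := oplusX_decompose u_neq0 hF3 mE sE An.
by exists u, E, (u%:P * ('X * E - (A + cc%:P * (u%:P * E)))); rewrite -eq.
Qed.

Lemma rf_step_oplusX n u (f g : {poly k} * {poly k}) : u != 0 ->
  rf_step n f g -> rf_step n.+1 (oplusX u^-1 u f) (oplusX u^-1 u g).
Proof.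
move=> u_neq0 [h [/in_FnP hF [<- <-]]].
have uV : (u^-1)%:P * u%:P = 1 :> {poly k} by rewrite -polyCM mulVf.
have evE t : ev_pair t (oplusX (u^-1)%:P u%:P h) = oplusX u^-1 u (ev_pair t h).
  rewrite !ev_pairE /oplusX /= rmorphB !rmorphM /= map_polyX !map_polyC /=.
  by rewrite !horner_evalE !hornerC.
by rewrite -!evE; apply/rf_step_evp/bezout_Fn_oplusX.
Qed.

End Homotopies.

Lemma eq_diag_rf (k : fieldType) n (u v : 'I_n -> k) :
  u =1 v -> diag_rf u = diag_rf v.
Proof. by move=> uv; rewrite /diag_rf (eq_bigr _ (fun i _ => congr1 _ (uv i))). Qed.

Lemma diag_rfS (k : fieldType) n (u : 'I_n.+1 -> k) :
  diag_rf u = oplusX (u ord0)^-1 (u ord0) (diag_rf (fun i => u (lift ord0 i))).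
Proof.
rewrite /diag_rf big_ord_recl /oplusX -mulmxE !mxE !big_ord_recl big_ord0 !mxE /=.
have -> : lift ord0 ord0 = 1 :> 'I_2 by apply/val_inj.
by rewrite big_ord0 /bump /=; congr pair; ring.
Qed.

Theorem rf_homotopic_diag_rf (k : fieldType) n (f : {poly k} * {poly k}) :
  in_Fn n f ->
  exists u : 'I_n -> k, (forall i, u i != 0) /\ rf_naive_homotopic n f (diag_rf u).
Proof.
elim: n f => [|n IHn] [A B] /[dup] inF /in_FnP hF.
  exists (fun=> 1); split=> [i|]; first exact: oner_neq0.
  have [mA sA sB _] := hF; move: sB; rewrite size_poly_leq0 /= => /eqP B0.
  rewrite /diag_rf big_ord0 !mxE /= B0 [A]size1_polyC ?sA //.
  by move: mA; rewrite monicE lead_coefE sA => /eqP ->; apply: rst_refl.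
have [g sg homAB] := rf_homotopic_den_full hF.
have /in_FnP hFg := (rf_homotopic_in_Fn homAB).1 inF.
case: g sg hFg homAB => A' B' /= sB' hFg homAB.
have [u [E [F [u_neq0 hEF st]]]] := rf_step_oplusX_split hFg sB'.
have [v [v_neq0 homEF]] := IHn (E, F) (proj2 (in_FnP _ _) hEF).
exists (fun i => if unlift ord0 i is Some j then v j else u); split.
  by move=> i; case: unlift.
rewrite diag_rfS unlift_none (@eq_diag_rf _ _ _ v); last by move=> i; rewrite liftK.
apply: rst_trans homAB (rst_trans _ _ _ _ _ (rst_step _ _ _ _ st) _).
exact: clos_rst_map (fun f g => rf_step_oplusX (g := g) u_neq0) _ _ homEF.
Qed.

Theorem lemma3p14 (k : fieldType) (n : nat) (Hn : (0 < n)%N) :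
  (forall S : 'M[k]_n, S \in sym_nd n ->
     exists u : 'I_n -> k, (forall i, u i != 0) /\
       sym_naive_homotopic S (diag_form u)) /\
  (forall f : {poly k} * {poly k}, in_Fn n f ->
     exists u : 'I_n -> k, (forall i, u i != 0) /\
       rf_naive_homotopic n f (diag_rf u)).
Proof. by split=> [S /sym_homotopic_diag_form | f /rf_homotopic_diag_rf]. Qed.
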